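(* Let $n\ge2$, $q$ not a root of unity, and let $V_\Lambda$ be the symmetric irreducible representation (Young tableau $l_1=\Lambda>0$, $l_2=\dots=l_n=0$) with crystal-basis generators $\widehat e^{\pm}_i$, $N_1,\dots,N_n$ as in the context. Let $E^{\pm}_i$, $H_i$ be the $sl(n)$ generators $E^{+}_{i}=\widehat e^{+}_{i}\sqrt{(N_i+1)N_{i+1}}$, $E^{-}_{i}=\sqrt{(N_i+1)N_{i+1}}\,\widehat e^{-}_{i}$, $H_i=N_i-N_{i+1}$, and $e^{\pm}_i$, $h_i$ the $sl_q(n)$ generators $e^{+}_{i}=\widehat e^{+}_{i}\sqrt{[N_i+1]_q[N_{i+1}]_q}$, $e^{-}_{i}=\sqrt{[N_i+1]_q[N_{i+1}]_q}\,\widehat e^{-}_{i}$, $h_i=H_i$. Then on $V_\Lambda$ the $sl(n)$ and $sl_q(n)$ generators are related by $$e^{+}_{i}=E^{+}_{i}\sqrt{\frac{[N_i+1]_q[N_{i+1}]_q}{(N_i+1)N_{i+1}}},\qquad e^{-}_{i}=\sqrt{\frac{[N_i+1]_q[N_{i+1}]_q}{(N_i+1)N_{i+1}}}\;E^{-}_{i},\qquad h_i=H_i,$$ giving an invertible deforming map between $sl(n)$ and $sl_q(n)$ on the symmetric irreducible representations; for $n=2$ this map coincides with the Curtright–Zachos map.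
   Context: $[x]_q=(q^x-q^{-x})/(q-q^{-1})$. Crystal-basis setting: by Kashiwara, in the limit $q\to0$ of $gl(n)_q$ there are operators $\widehat e^{\pm}_i$ ($i=1,\dots,n-1$) and a basis of each highest-weight irreducible representation labelled by weights, on which $N_i$ act diagonally (eigenvalue $l_i$, the $i$-th row length of the corresponding Young tableau), $\widehat e^{\pm}_i$ shift the weight by $\pm$ the $i$-th row of the Cartan matrix of $sl(n)$ (mapping basis vectors to basis vectors, or to zero at the ends of $i$-strings), and $[N_i,\widehat e^{\pm}_k]=\pm(\delta_{i,k}-\delta_{i-1,k})\widehat e^{\pm}_k$. The Curtright–Zachos map: for $sl(2)$ with generators $j_\pm,j_0$ and $sl_q(2)$ with $J_\pm,J_0$, $J_+=\mathcal Q j_+$, $J_-=j_-\mathcal Q$, $J_0=j_0$, with $\mathcal Q=\sqrt{[J_0+\mathbf J]_q[J_0-\mathbf J-1]_q/((j_0+\mathbf j)(j_0-\mathbf j-1))}$, where $\mathbf j(\mathbf j+1)$ and $[\mathbf J]_q[\mathbf J+1]_q$ are the Casimirs; here $\mathbf j=(N_1+N_2)/2$, $j_0=(N_1-N_2)/2$. The ratios are understood on eigenvalues where the denominators are nonzero. *)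

From HB Require Import structures.
From mathcomp Require Import all_boot all_order all_algebra.

Import Order.TTheory GRing.Theory Num.Theory.
Local Open Scope ring_scope.

Definition not_root_of_unity (C : numClosedFieldType) (q : C) : Prop :=
  q != 0 /\ forall k : nat, (0 < k)%N -> q ^+ k != 1.

Definition qnum (C : numClosedFieldType) (q : C) (x : int) : C :=
  (q ^ x - q ^ (- x)) / (q - q^-1).

(* Weights of gl(n) modules: occupation numbers (m_0, ..., m_{n-1}) (0-based
   indices; index k here is row k+1 of the paper).  The symmetric irrep V_Lambda
   has basis |m> with sum m = Lambda; vectors are coefficient functions
   v : n.-tuple nat -> C (v = sum_m v(m) |m>) supported on these weights. *)
Definition wocc (n : nat) (m : n.-tuple nat) (k : nat) : nat := nth 0%N m k.

Definition in_VLambda (C : numClosedFieldType) (n Lam : nat)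
  (v : n.-tuple nat -> C) : Prop :=
  forall m : n.-tuple nat, sumn m != Lam -> v m = 0.

Definition wt_shift (n : nat) (m : n.-tuple nat) (a b : nat) : n.-tuple nat :=
  [tuple (nth 0%N m j + (j == a :> nat) - (j == b :> nat))%N | j < n].

Definition opT (C : numClosedFieldType) (n : nat) :=
  (n.-tuple nat -> C) -> (n.-tuple nat -> C).

Definition op_diag (C : numClosedFieldType) (n : nat) (f : n.-tuple nat -> C) : opT C n :=
  fun v m => f m * v m.

(* crystal operators: ehat^+_i |m> = |m + e_i - e_{i+1}> (0 if m_{i+1} = 0),
   ehat^-_i |m> = |m - e_i + e_{i+1}> (0 if m_i = 0). *)
Definition ehat_plus (C : numClosedFieldType) (n i : nat) : opT C n :=
  fun v m => if (0 < wocc n m i)%N then v (wt_shift n m i.+1 i) else 0.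
Definition ehat_minus (C : numClosedFieldType) (n i : nat) : opT C n :=
  fun v m => if (0 < wocc n m i.+1)%N then v (wt_shift n m i i.+1) else 0.

Definition op_comp (C : numClosedFieldType) (n : nat) (A B : opT C n) : opT C n :=
  fun v => A (B v).

Definition sqfac (C : numClosedFieldType) (n i : nat) (m : n.-tuple nat) : C :=
  sqrtC (((wocc n m i).+1 * wocc n m i.+1)%N)%:R.
Definition E_plus (C : numClosedFieldType) (n i : nat) : opT C n :=
  op_comp C n (ehat_plus C n i) (op_diag C n (sqfac C n i)).
Definition E_minus (C : numClosedFieldType) (n i : nat) : opT C n :=
  op_comp C n (op_diag C n (sqfac C n i)) (ehat_minus C n i).
Definition H_op (C : numClosedFieldType) (n i : nat) : opT C n :=
  op_diag C n (fun m => ((wocc n m i)%:Z - (wocc n m i.+1)%:Z)%:~R).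

Definition qsqfac (C : numClosedFieldType) (q : C) (n i : nat) (m : n.-tuple nat) : C :=
  sqrtC (qnum C q (wocc n m i).+1 * qnum C q (wocc n m i.+1)).
Definition e_plus (C : numClosedFieldType) (q : C) (n i : nat) : opT C n :=
  op_comp C n (ehat_plus C n i) (op_diag C n (qsqfac C q n i)).
Definition e_minus (C : numClosedFieldType) (q : C) (n i : nat) : opT C n :=
  op_comp C n (op_diag C n (qsqfac C q n i)) (ehat_minus C n i).
Definition h_op (C : numClosedFieldType) (n i : nat) : opT C n := H_op C n i.

(* deforming factor sqrt([N_i+1]_q [N_{i+1}]_q / ((N_i+1) N_{i+1}))
   (x / 0 = 0 convention; only evaluated where the denominator is nonzero
   in the theorem) *)
Definition qdef_ratio (C : numClosedFieldType) (q : C) (n i : nat) (m : n.-tuple nat) : C :=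
  sqrtC (qnum C q (wocc n m i).+1 * qnum C q (wocc n m i.+1)
         / (((wocc n m i).+1 * wocc n m i.+1)%N)%:R).

(* Curtright-Zachos factor for n = 2: j = (N1+N2)/2, cz_j0 = (N1-N2)/2, J = j,
   J0 = cz_j0; [x]_q is evaluated only at integer rationals x (cz_j0+j, cz_j0-j-1). *)
Definition cz_j (m : 2.-tuple nat) : rat := ((wocc 2 m 0 + wocc 2 m 1)%N)%:R / 2%:R.
Definition cz_j0 (m : 2.-tuple nat) : rat := ((wocc 2 m 0)%:Z - (wocc 2 m 1)%:Z)%:~R / 2%:R.
Definition qnumQ (C : numClosedFieldType) (q : C) (x : rat) : C := qnum C q (numq x).
Definition CZ_Q (C : numClosedFieldType) (q : C) (m : 2.-tuple nat) : C :=
  sqrtC (qnumQ C q (cz_j0 m + cz_j m) * qnumQ C q (cz_j0 m - cz_j m - 1)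
         / ratr ((cz_j0 m + cz_j m) * (cz_j0 m - cz_j m - 1))).

From HB Require Import structures.
From mathcomp Require Import all_boot all_order all_algebra.
From mathcomp Require Import ring.
From Stdlib Require Import FunctionalExtensionality.
Import Order.TTheory GRing.Theory Num.Theory.
Local Open Scope ring_scope.

(** Since (N_i+1) N_{i+1} is a nonnegative real, the square
    root splits: sqrt([N_i+1]_q [N_{i+1}]_q) = sqrt((N_i+1) N_{i+1}) * ratio,
    and the ratio is invertible wherever the classical factor is nonzero,
    because [k]_q <> 0 for k > 0 when q is not a root of unity.  For n = 2 one
    has j0 + j = N_1 and j0 - j - 1 = -(N_2 + 1), so the Curtright-Zachos factor
    is the deforming ratio taken one step along the 1-string, which is exactly
    what moving a diagonal operator across a crystal operator produces. *)

Section Weights.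

Variable n : nat.

Lemma wocc_shift (m : n.-tuple nat) a b j : (j < n)%N ->
  wocc n (wt_shift n m a b) j = (wocc n m j + (j == a) - (j == b))%N.
Proof.
move=> ltjn; rewrite /wocc /wt_shift -[j]/(val (Ordinal ltjn)) -tnth_nth.
by rewrite tnth_mktuple.
Qed.

Lemma wocc_shift_inc (m : n.-tuple nat) a b : (a < n)%N -> a != b ->
  wocc n (wt_shift n m a b) a = (wocc n m a).+1.
Proof. by move=> ltan /negbTE neq_ab; rewrite wocc_shift // eqxx neq_ab addn1 subn0. Qed.

Lemma wocc_shift_dec (m : n.-tuple nat) a b : (b < n)%N -> a != b ->
  wocc n (wt_shift n m a b) b = (wocc n m b).-1.
Proof.
by move=> ltbn neq_ab; rewrite wocc_shift // eq_sym (negbTE neq_ab) eqxx addn0 subn1.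
Qed.

End Weights.

Section Deformation.

Variables (C : numClosedFieldType) (q : C).

Lemma qnum0 : qnum C q 0 = 0.
Proof. by rewrite /qnum oppr0 subrr mul0r. Qed.

Lemma qnumN (x : int) : qnum C q (- x) = - qnum C q x.
Proof. by rewrite /qnum opprK -mulNr opprB. Qed.

Lemma qnum_neq0 (k : nat) : not_root_of_unity C q -> (0 < k)%N -> qnum C q k != 0.
Proof.
move=> [q_neq0 q_not_root] k_gt0.
have qpow_neq0 j : (0 < j)%N -> q ^+ j - (q ^+ j)^-1 != 0.
  move=> j_gt0; rewrite subr_eq0; apply/eqP => qjV.
  have := q_not_root (j + j)%N; rewrite addn_gt0 j_gt0 exprD {2}qjV.
  by rewrite divff ?expf_neq0 // eqxx => /(_ isT).
rewrite /qnum -exprnN mulf_neq0 ?invr_eq0 ?qpow_neq0 //.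
by have := qpow_neq0 1%N isT; rewrite expr1.
Qed.

Lemma sqrtC_factor (r x : C) : 0 < r -> sqrtC x = sqrtC r * sqrtC (x / r).
Proof. by move=> r_gt0; rewrite -rootCMl ?ltW // mulrC divfK ?gt_eqF. Qed.

Lemma op_diag_comp {n} (f g : n.-tuple nat -> C) v :
  op_diag C n f (op_diag C n g v) = op_diag C n (fun m => f m * g m) v.
Proof. by apply: functional_extensionality => m; rewrite /op_diag mulrA. Qed.

Lemma op_diagC {n} (f g : n.-tuple nat -> C) v :
  op_diag C n f (op_diag C n g v) = op_diag C n g (op_diag C n f v).
Proof. by apply: functional_extensionality => m; rewrite /op_diag mulrCA. Qed.

Lemma op_diag_ext {n} {f g : n.-tuple nat -> C} : f =1 g -> op_diag C n f = op_diag C n g.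
Proof. by move/functional_extensionality->. Qed.

Variables n i : nat.

Lemma qsqfac_factor m : qsqfac C q n i m = sqfac C n i m * qdef_ratio C q n i m.
Proof.
rewrite /qsqfac /sqfac /qdef_ratio.
have [->|occ_gt0] := posnP (wocc n m i.+1).
  by rewrite muln0 qnum0 !(mulr0, mul0r) !sqrtC0 mul0r.
by apply: sqrtC_factor; rewrite ltr0n muln_gt0.
Qed.

Lemma sqfac_qdef_ratioK m : not_root_of_unity C q ->
  sqfac C n i m * qdef_ratio C q n i m / qdef_ratio C q n i m = sqfac C n i m.
Proof.
move=> q_gen; rewrite /sqfac.
have [->|occ_gt0] := posnP (wocc n m i.+1); first by rewrite muln0 sqrtC0 !mul0r.
rewrite mulfK // /qdef_ratio sqrtC_eq0.
apply: mulf_neq0; first by apply: mulf_neq0; apply: qnum_neq0.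
by rewrite invr_eq0 pnatr_eq0 -lt0n muln_gt0.
Qed.

Lemma e_plus_deform v :
  e_plus C q n i v = E_plus C n i (op_diag C n (qdef_ratio C q n i) v).
Proof. by rewrite /e_plus /E_plus /op_comp op_diag_comp (op_diag_ext qsqfac_factor). Qed.

Lemma e_minus_deform v :
  e_minus C q n i v = op_diag C n (qdef_ratio C q n i) (E_minus C n i v).
Proof.
rewrite /e_minus /E_minus /op_comp op_diag_comp.
rewrite [in LHS](op_diag_ext (g := fun m => qdef_ratio C q n i m * sqfac C n i m)) // => m.
by rewrite qsqfac_factor mulrC.
Qed.

Lemma ehat_plus_diag (f g : n.-tuple nat -> C) v :
  (forall m, (0 < wocc n m i)%N -> f m = g (wt_shift n m i.+1 i)) ->
  ehat_plus C n i (op_diag C n g v) = op_diag C n f (ehat_plus C n i v).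
Proof.
move=> fg; apply: functional_extensionality => m; rewrite /ehat_plus /op_diag.
by case: ifP => [/fg->|_]; rewrite ?mulr0.
Qed.

Lemma ehat_minus_diag (f g : n.-tuple nat -> C) v :
  (forall m, (0 < wocc n m i.+1)%N -> f m = g (wt_shift n m i i.+1)) ->
  ehat_minus C n i (op_diag C n g v) = op_diag C n f (ehat_minus C n i v).
Proof.
move=> fg; apply: functional_extensionality => m; rewrite /ehat_minus /op_diag.
by case: ifP => [/fg->|_]; rewrite ?mulr0.
Qed.

Hypothesis q_gen : not_root_of_unity C q.

Lemma E_plus_undeform v :
  E_plus C n i v = e_plus C q n i (op_diag C n (fun m => (qdef_ratio C q n i m)^-1) v).
Proof.
rewrite e_plus_deform /E_plus /op_comp !op_diag_comp.
rewrite [in RHS](op_diag_ext (g := sqfac C n i)) // => m.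
by rewrite sqfac_qdef_ratioK.
Qed.

Lemma E_minus_undeform v :
  E_minus C n i v = op_diag C n (fun m => (qdef_ratio C q n i m)^-1) (e_minus C q n i v).
Proof.
rewrite e_minus_deform /E_minus /op_comp !op_diag_comp.
rewrite [in RHS](op_diag_ext (g := sqfac C n i)) // => m.
by rewrite mulrC [_^-1 * _]mulrC mulrA sqfac_qdef_ratioK.
Qed.

End Deformation.

Section CurtrightZachos.

Variables (C : numClosedFieldType) (q : C).

(* [j0 - j - 1]_q = [-(N_2 + 1)]_q = -[N_2 + 1]_q, and the sign cancels against
   that of the denominator. *)
Lemma CZ_Q_occ m :
  CZ_Q C q m = sqrtC (qnum C q (wocc 2 m 0) * qnum C q (wocc 2 m 1).+1
                      / ((wocc 2 m 0 * (wocc 2 m 1).+1)%N)%:R).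
Proof.
rewrite /CZ_Q /qnumQ; set a := wocc 2 m 0; set b := wocc 2 m 1.
have -> : cz_j0 m + cz_j m = (a%:Z)%:~R.
  by rewrite /cz_j0 /cz_j -/a -/b intrB -!pmulrn natrD; field.
have -> : cz_j0 m - cz_j m - 1 = (- (b.+1)%:Z)%:~R.
  by rewrite /cz_j0 /cz_j -/a -/b intrB intrN -!pmulrn natrD -addn1 natrD; field.
rewrite !numq_int rmorphM /= !ratr_int qnumN intrN -!pmulrn.
by rewrite !(mulrN, mulNr, invrN) opprK natrM.
Qed.

Lemma CZ_Q_raise m : (0 < wocc 2 m 0)%N ->
  CZ_Q C q m = qdef_ratio C q 2 0 (wt_shift 2 m 1 0).
Proof.
move=> occ_gt0; rewrite CZ_Q_occ /qdef_ratio.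
by rewrite wocc_shift_dec // wocc_shift_inc // prednK.
Qed.

Lemma CZ_Q_lower m : (0 < wocc 2 m 1)%N ->
  qdef_ratio C q 2 0 m = CZ_Q C q (wt_shift 2 m 0 1).
Proof.
move=> occ_gt0; rewrite CZ_Q_occ /qdef_ratio.
by rewrite wocc_shift_dec // wocc_shift_inc // prednK.
Qed.

Lemma e_plus_CZ w : e_plus C q 2 0 w = op_diag C 2 (CZ_Q C q) (E_plus C 2 0 w).
Proof.
rewrite e_plus_deform /E_plus /op_comp op_diagC.
by rewrite (@ehat_plus_diag C 2 0 (CZ_Q C q)) // => m /CZ_Q_raise.
Qed.

Lemma e_minus_CZ w : e_minus C q 2 0 w = E_minus C 2 0 (op_diag C 2 (CZ_Q C q) w).
Proof.
rewrite e_minus_deform /E_minus /op_comp op_diagC.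
by rewrite (@ehat_minus_diag C 2 0 (qdef_ratio C q 2 0)) // => m /CZ_Q_lower.
Qed.

End CurtrightZachos.

(* The identities hold on every coefficient function. *)
Theorem mainTheorem2 (C : numClosedFieldType) (q : C) (n Lam : nat) :
  (2 <= n)%N -> (0 < Lam)%N -> not_root_of_unity C q ->
  forall i : nat, (i.+1 < n)%N ->
  forall v : n.-tuple nat -> C, in_VLambda C n Lam v ->
  [/\ e_plus C q n i v = op_comp C n (E_plus C n i) (op_diag C n (qdef_ratio C q n i)) v,
      e_minus C q n i v = op_comp C n (op_diag C n (qdef_ratio C q n i)) (E_minus C n i) v,
      h_op C n i v = H_op C n i v,
      E_plus C n i v
        = op_comp C n (e_plus C q n i) (op_diag C n (fun m => (qdef_ratio C q n i m)^-1)) v &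
      E_minus C n i v
        = op_comp C n (op_diag C n (fun m => (qdef_ratio C q n i m)^-1)) (e_minus C q n i) v] /\
  (forall (e : n = 2%N) (w : 2.-tuple nat -> C),
        w = eq_rect n (fun k => k.-tuple nat -> C) v 2%N e ->
        e_plus C q 2 0 w = op_diag C 2 (CZ_Q C q) (E_plus C 2 0 w) /\
        e_minus C q 2 0 w = E_minus C 2 0 (op_diag C 2 (CZ_Q C q) w)).
Proof.
move=> _ _ q_gen i _ v _; split.
  split; [exact: e_plus_deform | exact: e_minus_deform | by [] |
          exact: E_plus_undeform | exact: E_minus_undeform].
by move=> _ w _; split; [exact: e_plus_CZ | exact: e_minus_CZ].
Qed.
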